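(* Let $q$ be a prime power and $m\ge2$ an integer, and set $n'=\lceil\frac{q^{m-1}}{q-1}\rceil$. Let $\mathbf{C}'$ be the code obtained from the $q$-ary simplex $[\frac{q^m-1}{q-1},m,q^{m-1}]_q$ code by the extension construction. Then $\mathbf{C}'$ is a minimal linear $[\frac{q^m-1}{q-1}+n',\ m,\ q^{m-1}]_q$ code violating the Ashikhmin–Barg condition, with weight distribution: one codeword of weight $0$, $q^{m-1}-1$ codewords of weight $q^{m-1}$, and $(q-1)q^{m-1}$ codewords of weight $q^{m-1}+n'$.
   Context: The $q$-ary simplex code of dimension $m$ is generated by an $m\times\frac{q^m-1}{q-1}$ matrix whose columns are representatives of all one-dimensional subspaces of $\mathbf{F}_q^m$; all its nonzero codewords have weight $q^{m-1}$. Extension construction for a $q$-ary $[N,K]$ code $\mathbf{D}$ with $K\ge2$, minimum nonzero weight $w_{min}$, maximum weight $w_{max}$ and $n'=\lceil\frac{qw_{min}}{q-1}\rceil-w_{max}\ge1$: choose a basis $\mathbf{r}_1,\dots,\mathbf{r}_K$ with $wt(\mathbf{r}_1)=w_{max}$, $wt(\mathbf{r}_2)=w_{min}$ and $\mathbf{a}\in(\mathbf{F}_q^* )^{n'}$; the extended code is generated by $(\mathbf{a},\mathbf{r}_1),(\mathbf{0},\mathbf{r}_2),\dots,(\mathbf{0},\mathbf{r}_K)$ in $\mathbf{F}_q^{n'+N}$. Minimal code: any nonzero codewords $\mathbf{c},\mathbf{c}'$ with $supp(\mathbf{c}')\subseteq supp(\mathbf{c})$ satisfy $\mathbf{c}'=\lambda\mathbf{c}$,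 $\lambda\in\mathbf{F}_q^*$. Ashikhmin–Barg condition: $w_{min}/w_{max}>(q-1)/q$. *)

From HB Require Import structures.
From mathcomp Require Import all_boot all_order all_algebra all_field.
Set Implicit Arguments. Unset Strict Implicit. Unset Printing Implicit Defensive.
Import GRing.Theory.
Local Open Scope ring_scope.

Section Codes.
Variable F : finFieldType.

Definition supp n (c : 'rV[F]_n) : {set 'I_n} := [set i | c 0 i != 0].
Definition wt n (c : 'rV[F]_n) : nat := #|supp c|.

Definition codewords k n (G : 'M[F]_(k, n)) : {set 'rV[F]_n} :=
  [set c : 'rV[F]_n | (c <= G)%MS].

Definition wmax k n (G : 'M[F]_(k, n)) : nat := \max_(c in codewords G) wt c.
Definition wmin k n (G : 'M[F]_(k, n)) : nat :=
  \big[minn/wmax G]_(c in codewords G | c != 0) wt c.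

Definition wdist k n (G : 'M[F]_(k, n)) (w : nat) : nat :=
  #|[set c in codewords G | wt c == w]|.

Definition minimal_code k n (G : 'M[F]_(k, n)) : Prop :=
  forall c c', c \in codewords G -> c' \in codewords G -> c != 0 -> c' != 0 ->
    supp c' \subset supp c -> exists2 l : F, l != 0 & c' = l *: c.

(* Ashikhmin--Barg condition wmin/wmax > (q-1)/q, q = #|F| *)
Definition AB_condition k n (G : 'M[F]_(k, n)) : bool :=
  ((#|F| - 1) * wmax G < #|F| * wmin G)%N.

(* q-ary simplex generator matrix: columns are representatives of all
   one-dimensional subspaces of F^m (each exactly once) *)
Definition simplex_gen m N (G : 'M[F]_(m, N)) : Prop :=
  (forall j, col j G != 0) /\
  (forall v : 'cV[F]_m, v != 0 -> exists! j, exists c : F, v = c *: col j G).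

Definition ceil_div (a b : nat) : nat := ((a + b.-1) %/ b)%N.

Definition ext_len k n (D : 'M[F]_(k, n)) : nat :=
  (ceil_div (#|F| * wmin D) (#|F| - 1) - wmax D)%N.

(* Basis hypotheses of the extension construction: the rows r_1..r_K of R
   form a basis of the code D, wt(r_1) = wmax, wt(r_2) = wmin
   (r_1, r_2 are the rows of index 0 and 1). *)
Definition ext_basis k n (D R : 'M[F]_(k, n)) : Prop :=
  [/\ row_free R, (R == D)%MS,
      (forall i : 'I_k, nat_of_ord i = 0%N -> wt (row i R) = wmax D) &
      (forall i : 'I_k, nat_of_ord i = 1%N -> wt (row i R) = wmin D)].

(* Generator matrix of the extended code: rows (a, r_1), (0, r_2), ..., (0, r_K) *)
Definition ext_mx k n n' (a : 'rV[F]_n') (R : 'M[F]_(k, n)) : 'M[F]_(k, n' + n) :=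
  row_mx (\matrix_(i < k, j < n') if nat_of_ord i == 0%N then a 0 j else 0) R.

End Codes.

(* Every nonzero simplex codeword x G has weight q^(m-1): the nonzero column
   vectors v are partitioned into the punctured lines spanned by the columns of G,
   so counting the v with x v <> 0 (the complement of a hyperplane) line by line
   gives wt (x G) (q - 1) = q^m - q^(m-1).  The same picture shows minimality: if
   supp (y G) is contained in supp (x G), then every v killed by x is killed by y,
   so y is a multiple of x.
   The extension prepends x_1 a to x R, so a codeword has weight q^(m-1) or
   q^(m-1) + n' according as x_1 = 0 or not, and minimality passes to it through
   the R-part.  Since q w = (q - 1) w + w, the extension length is
   ceil(w / (q - 1)), and (q - 1) n' >= w is exactly the failure of the
   Ashikhmin-Barg inequality. *)

From mathcomp Require Import all_boot all_order all_algebra all_field.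
From mathcomp Require Import ring zify.
Import GRing.Theory.
Set Implicit Arguments. Unset Strict Implicit. Unset Printing Implicit Defensive.
Local Open Scope ring_scope.

Lemma ceil_divMDl d k a : (0 < d)%N -> ceil_div (d * k + a) d = (k + ceil_div a d)%N.
Proof. by move=> d_gt0; rewrite /ceil_div -addnA mulnC divnMDl. Qed.

Lemma leq_ceil_div a d : (0 < d)%N -> (a <= ceil_div a d * d)%N.
Proof. rewrite /ceil_div; lia. Qed.

Lemma bigmin_leq (I : eqType) (r : seq I) (P : pred I) (f : I -> nat) x j :
  j \in r -> P j -> (\big[minn/x]_(i <- r | P i) f i <= f j)%N.
Proof.
elim: r => // i r IHr; rewrite inE big_cons => /orP[/eqP <- -> | j_r Pj].
  exact: geq_minl.
by case: ifP => _; rewrite ?geq_min IHr ?orbT.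
Qed.

Section Weight.
Variable F : finFieldType.

Lemma wt_sum n (c : 'rV[F]_n) : wt c = (\sum_(j < n) (c 0%R j != 0%R : nat))%N.
Proof.
by rewrite /wt /supp -sum1dep_card big_mkcond; apply: eq_bigr => j _; case: ifP.
Qed.

Lemma wt0 n : wt (0 : 'rV[F]_n) = 0%N.
Proof. by rewrite wt_sum big1 // => j _; rewrite mxE eqxx. Qed.

Lemma wt_row_mx n1 n2 (u : 'rV[F]_n1) (v : 'rV[F]_n2) :
  wt (row_mx u v) = (wt u + wt v)%N.
Proof.
rewrite !wt_sum big_split_ord; congr addn; apply: eq_bigr => j _.
  by rewrite row_mxEl.
by rewrite row_mxEr.
Qed.

Lemma wt_scale_full n (c : F) (a : 'rV[F]_n) : (forall j, a 0 j != 0) ->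
  wt (c *: a) = ((c != 0%R) * n)%N.
Proof.
move=> a_full; have [->|c_nz] := eqVneq c 0; first by rewrite scale0r wt0.
rewrite wt_sum (eq_bigr (fun=> 1%N)) ?sum1_card ?card_ord ?mul1n // => j _.
by rewrite mxE mulf_eq0 (negPf c_nz) (negPf (a_full j)).
Qed.

End Weight.

Section Codes.
Variables (F : finFieldType) (k n : nat) (M : 'M[F]_(k, n)).

Lemma mem_codewords x : x *m M \in codewords M.
Proof. by rewrite inE submxMl. Qed.

Lemma codewordsP c : reflect (exists x, c = x *m M) (c \in codewords M).
Proof. by rewrite inE; apply: submxP. Qed.

Lemma codewords_eqmx k' (M' : 'M[F]_(k', n)) :
  (M == M')%MS -> codewords M = codewords M'.
Proof. by move/eqmxP => eqMM'; apply/setP => c; rewrite !inE eqMM'. Qed.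

Lemma wmax_eq w : (forall c, c \in codewords M -> wt c <= w)%N ->
  (exists2 c, c \in codewords M & wt c = w) -> wmax M = w.
Proof.
move=> le_w [c cM wc]; apply/eqP; rewrite eqn_leq; apply/andP; split.
  exact/bigmax_leqP.
by rewrite -wc leq_bigmax_cond.
Qed.

Lemma wmin_eq w : (forall c, c \in codewords M -> c != 0 -> (w <= wt c)%N) ->
  (exists2 c, c \in codewords M & c != 0 /\ wt c = w) -> wmin M = w.
Proof.
move=> ge_w [c cM [c_nz wc]]; apply/eqP; rewrite eqn_leq; apply/andP; split.
  by rewrite -wc bigmin_leq ?mem_index_enum ?cM.
rewrite /wmin; apply: (big_ind (fun v => w <= v)%N) => [||c' /andP[]].
- by rewrite -wc; apply: leq_bigmax_cond.
- by move=> u v w_u w_v; rewrite leq_min w_u.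
- exact: ge_w.
Qed.

Lemma wdist_row_free w : row_free M ->
  wdist M w = #|[set x : 'rV_k | wt (x *m M) == w]|.
Proof.
move=> M_free; rewrite /wdist -(card_imset _ (row_free_inj M_free)).
apply: eq_card => c; rewrite !inE; apply/andP/imsetP => [[/submxP[x ->] wx]|[x]].
  by exists x; rewrite ?inE.
by rewrite inE => wx ->; rewrite submxMl.
Qed.

End Codes.

Section LinearAlgebra.
Variable F : finFieldType.
Local Notation q := #|F|.

Lemma card_scalar_fiber (V : finLmodType F) (f : V -> F) (w : V) c :
  scalar f -> f w = 1 -> (#|[set v | f v == c]| * q)%N = #|V|.
Proof.
move=> f_lin fw.
have fiberE d : #|[set v | f v == d]| = #|[set v | f v == c]|.
  rewrite -(card_imset _ (addrI ((c - d) *: w))); apply: eq_card => v.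
  rewrite inE; apply/imsetP/eqP => [[x] | fv].
    by rewrite inE => /eqP fx ->; rewrite f_lin fw mulr1 fx subrK.
  exists ((d - c) *: w + v); first by rewrite inE f_lin fw mulr1 fv subrK.
  by rewrite addrA -scalerDl -opprB ?addNr ?addrN scale0r add0r.
rewrite -[#|V|]sum1_card (partition_big f predT) //=.
rewrite (eq_bigr (fun=> #|[set v | f v == c]|)) => [|d _]; last first.
  by rewrite sum1dep_card -(fiberE d).
by rewrite big_const iter_addn_0 mulnC.
Qed.

Lemma card_scalar_ker_mx r s (f : 'M[F]_(r, s) -> F) w :
  scalar f -> f w = 1 -> #|[set v | f v == 0]| = (q ^ (r * s).-1)%N.
Proof.
move=> f_lin fw; have q_gt1 := card_finNzRing_gt1 F.
(* [r * s = 0] is impossible, as [q] does not divide [#|'M_(r, s)|] = 1. *)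
have := card_scalar_fiber 0 f_lin fw; rewrite card_mx.
case: (r * s)%N => [|rs] /eqP.
  by rewrite muln_eq1 => /andP[_ /eqP q1]; rewrite q1 in q_gt1.
by rewrite expnSr eqn_pmul2r ?(ltnW q_gt1) // => /eqP.
Qed.

Lemma mulmx_entry_col n p (x : 'rV[F]_n) (A : 'M_(n, p)) j :
  (x *m A) 0 j = (x *m col j A) 0 0.
Proof. by rewrite colE mulmxA -colE [RHS]mxE. Qed.

Lemma rV_proportional n (x y : 'rV[F]_n) : x != 0 ->
  (forall v : 'cV_n, (x *m v) 0 0 = 0 -> (y *m v) 0 0 = 0) -> exists l, y = l *: x.
Proof.
move=> /rV0Pn[k xk_nz] ker_sub; exists (y 0 k / x 0 k); apply/rowP => i; rewrite !mxE.
(* x annihilates x_k e_i - x_i e_k. *)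
have := ker_sub (x 0 k *: delta_mx i 0 - x 0 i *: delta_mx k 0).
rewrite !mulmxBr -!scalemxAr -!colE !mxE mulrC subrr => /(_ erefl)/eqP.
rewrite subr_eq0 => /eqP e.
by rewrite -[y 0 i](mulKf xk_nz) e; ring.
Qed.

End LinearAlgebra.

Section Simplex.
Variables (F : finFieldType) (m N : nat) (G : 'M[F]_(m, N)).
Hypothesis G_simplex : simplex_gen G.
Local Notation q := #|F|.

Lemma card_nonzero_scale_invariant (Q : pred 'cV[F]_m) :
    (forall c v, c != 0 -> Q (c *: v) = Q v) ->
  #|[set v | (v != 0) && Q v]| = (#|[set j | Q (col j G)]| * q.-1)%N.
Proof.
move=> QZ; have [col_nz col_uniq] := G_simplex.
(* (j, c) |-> c *: col j G is a bijection from 'I_N * F^* onto the nonzero vectors. *)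
pose D := setX [set j | Q (col j G)] [set~ (0 : F)].
pose f (p : 'I_N * F) := p.2 *: col p.1 G.
have f_inj : {in D &, injective f}.
  move=> [j c] [j' c']; rewrite !inE /f /= => /andP[_ c_nz] _ eq_f.
  have v_nz : c *: col j G != 0 by rewrite scaler_eq0 negb_or c_nz col_nz.
  have [j0 [_ j0_uniq]] := col_uniq _ v_nz.
  have ej : j = j' by rewrite -(j0_uniq j) ?(j0_uniq j'); [| exists c' | exists c].
  subst j'.
  move/eqP: eq_f; rewrite -subr_eq0 -scalerBl scaler_eq0 (negPf (col_nz j)) orbF.
  by rewrite subr_eq0 => /eqP ->.
rewrite -(cardsC1 (0 : F)) -cardsX -(card_in_imset f_inj); apply: eq_card => v.
rewrite inE; apply/andP/imsetP => [[v_nz Qv] | [[j c]]].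
  have [j [[c v_eq] _]] := col_uniq _ v_nz.
  have c_nz : c != 0 by apply: contraNneq v_nz => c0; rewrite v_eq c0 scale0r.
  by exists (j, c); rewrite // !inE -(QZ c) // -v_eq Qv c_nz.
rewrite !inE /f /= => /andP[Qj c_nz] ->.
by rewrite scaler_eq0 negb_or c_nz col_nz QZ.
Qed.

Lemma simplex_length : (N * q.-1 = q ^ m - 1)%N.
Proof.
have := @card_nonzero_scale_invariant predT (fun _ _ _ => erefl).
have -> : [set v : 'cV[F]_m | (v != 0) && predT v] = [set~ 0].
  by apply/setP => v; rewrite !inE andbT.
rewrite cardsC1 card_mx muln1 subn1 => ->; congr muln.
by rewrite -[LHS]card_ord; apply: eq_card => j; rewrite inE.
Qed.

Lemma simplex_wt x : x != 0 -> wt (x *m G) = (q ^ m.-1)%N.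
Proof.
move=> x_nz; have /rV0Pn[k xk_nz] := x_nz.
have m_gt0 : (0 < m)%N by apply: leq_ltn_trans (ltn_ord k).
pose f (v : 'cV[F]_m) := (x *m v) 0 0.
have f_lin : scalar f by move=> c u v; rewrite /f mulmxDr -scalemxAr !mxE.
have f1 : f ((x 0 k)^-1 *: delta_mx k 0) = 1.
  by rewrite /f -scalemxAr -colE !mxE mulVf.
have fZ c v : c != 0 -> (f (c *: v) != 0) = (f v != 0).
  by move=> c_nz; rewrite /f -scalemxAr mxE mulf_eq0 (negPf c_nz).
have := card_nonzero_scale_invariant fZ.
have -> : [set v | (v != 0) && (f v != 0)] = ~: [set v | f v == 0].
  apply/setP => v; rewrite !inE andb_idl //.
  by apply: contra => /eqP->; rewrite /f mulmx0 mxE.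
have -> : #|[set j | f (col j G) != 0]| = wt (x *m G).
  by apply: eq_card => j; rewrite !inE /f [in RHS]mulmx_entry_col.
rewrite (cardsCs (~: [set v | f v == 0])) setCK (card_scalar_ker_mx f_lin f1).
rewrite card_mx !muln1.
rewrite -[in (q ^ m)%N](prednK m_gt0) expnSr -[X in (_ - X)%N]muln1 -mulnBr subn1.
have q_gt1 := card_finNzRing_gt1 F.
by move/eqP; rewrite eqn_pmul2r -?subn1 ?subn_gt0 // => /eqP.
Qed.

Lemma simplex_minimal : minimal_code G.
Proof.
move=> c c' /codewordsP[x ->] /codewordsP[y ->] c_nz c'_nz supp_sub.
have x_nz : x != 0 by apply: contraNneq c_nz => ->; rewrite mul0mx.
have [l y_eq] : exists l, y = l *: x.
  apply: rV_proportional x_nz _ => v xv0.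
  have [->|v_nz] := eqVneq v 0; first by rewrite mulmx0 mxE.
  have [j [[a v_eq] _]] := G_simplex.2 v v_nz.
  have a_nz : a != 0 by apply: contraNneq v_nz => a0; rewrite v_eq a0 scale0r.
  have entry (z : 'rV_m) : (z *m v) 0 0 = a * (z *m G) 0 j.
    by rewrite v_eq -scalemxAr mxE [in RHS]mulmx_entry_col.
  move: xv0; rewrite !entry => /eqP; rewrite mulf_eq0 (negPf a_nz) /= => xj0.
  have : j \notin supp (y *m G) by apply/negP => /(subsetP supp_sub); rewrite inE xj0.
  by rewrite inE negbK => /eqP->; rewrite mulr0.
exists l; last by rewrite y_eq scalemxAl.
by apply: contraNneq c'_nz => l0; rewrite y_eq l0 scale0r mul0mx.
Qed.

Lemma simplex_codeword_wt c : c \in codewords G -> c != 0 -> wt c = (q ^ m.-1)%N.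
Proof.
move=> /codewordsP[x ->] c_nz; apply: simplex_wt.
by apply: contraNneq c_nz => ->; rewrite mul0mx.
Qed.

End Simplex.

Section Extension.
Variables (F : finFieldType) (k n n' : nat) (a : 'rV[F]_n') (R : 'M[F]_(k, n)).

Lemma mul_ext_mx (x : 'rV_k) (i0 : 'I_k) : i0 = 0 :> nat ->
  x *m ext_mx a R = row_mx (x 0 i0 *: a) (x *m R).
Proof.
move=> i0E; rewrite mul_mx_row; congr row_mx; apply/rowP => j.
rewrite !mxE (bigD1 i0) //= !mxE i0E eqxx big1 ?addr0 // => i ne_i_i0.
rewrite mxE; case: eqP => [i_0 | _]; last by rewrite mulr0.
by case/eqP: ne_i_i0; apply: val_inj; rewrite /= i_0 i0E.
Qed.

Lemma row_free_ext_mx : row_free R -> row_free (ext_mx a R).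
Proof.
move=> R_free; rewrite /row_free eqn_leq rank_leq_row /=.
have extK : ext_mx a R *m col_mx 0 1%:M = R by rewrite mul_row_col mulmx0 mulmx1 add0r.
by rewrite -{1}(eqP R_free) -[X in (\rank X <= _)%N]extK mxrankM_maxl.
Qed.

Lemma minimal_ext_mx : row_free R -> minimal_code R -> minimal_code (ext_mx a R).
Proof.
move=> R_free R_min c c' /codewordsP[x ->] /codewordsP[y ->] c_nz c'_nz supp_sub.
rewrite !(mulmx_free_eq0 _ (row_free_ext_mx R_free)) in c_nz c'_nz.
have [l l_nz yR_eq] : exists2 l, l != 0 & y *m R = l *: (x *m R).
  apply: R_min; rewrite ?mem_codewords ?(mulmx_free_eq0 _ R_free) //.
  apply/subsetP => j; have := subsetP supp_sub (rshift n' j).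
  by rewrite !inE !mul_mx_row !row_mxEr.
exists l => //; have -> : y = l *: x.
  by apply: (row_free_inj R_free); rewrite yR_eq scalemxAl.
by rewrite scalemxAl.
Qed.

Hypothesis a_full : forall j, a 0 j != 0.

Lemma wt_mul_ext_mx (x : 'rV_k) (i0 : 'I_k) : i0 = 0 :> nat ->
  wt (x *m ext_mx a R) = (wt (x *m R) + (x 0%R i0 != 0%R) * n')%N.
Proof. by move=> i0E; rewrite (mul_ext_mx _ i0E) wt_row_mx wt_scale_full // addnC. Qed.

End Extension.

Section ExtendedSimplex.
Variables (F : finFieldType) (m N : nat) (G R : 'M[F]_(m, N)).
Hypotheses (m_gt1 : (1 < m)%N) (G_simplex : simplex_gen G) (R_basis : ext_basis G R).
Variable a : 'rV[F]_(ext_len G).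
Hypothesis a_full : forall j, a 0 j != 0.
Local Notation q := #|F|.
Local Notation w := (q ^ m.-1)%N.
Local Notation n' := (ceil_div w (q - 1)).

(* [ext_mx] prepends [a] to row [i0]; [e_i1] is a nonzero message vanishing at
   [i0], which is where [m >= 2] is needed. *)
Let i0 : 'I_m := Ordinal (ltnW m_gt1).
Let i1 : 'I_m := Ordinal m_gt1.

Let q_gt1 : (1 < q)%N. Proof. exact: card_finNzRing_gt1. Qed.
Let q1_gt0 : (0 < q - 1)%N. Proof. by rewrite subn_gt0. Qed.
Let w_gt0 : (0 < w)%N. Proof. by rewrite expn_gt0 ltnW. Qed.
Let n'_gt0 : (0 < n')%N.
Proof.
have := leq_ceil_div w q1_gt0; rewrite lt0n.
by apply: contraTneq => ->; rewrite -ltnNge.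
Qed.
Let q_mul_w : (q * w = (q - 1) * w + w)%N.
Proof. by rewrite mulnBl mul1n subnK // leq_pmull // ltnW. Qed.

Let R_free : row_free R. Proof. by case: R_basis. Qed.
Let codewordsRG : codewords R = codewords G.
Proof. by case: R_basis => _ /codewords_eqmx. Qed.

Let delta_nz (i : 'I_m) : delta_mx 0 i != 0 :> 'rV[F]_m.
Proof. by apply/rV0Pn; exists i; rewrite mxE !eqxx oner_eq0. Qed.

Let wt_mulR x : wt (x *m R) = ((x != 0%R) * w)%N.
Proof.
have [->|x_nz] := eqVneq x 0; first by rewrite mul0mx wt0.
rewrite mul1n (simplex_codeword_wt G_simplex) -?codewordsRG ?mem_codewords //.
by rewrite mulmx_free_eq0.
Qed.

Lemma simplex_wmax : wmax G = w.
Proof.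
apply: wmax_eq => [c cG|].
  by have [->|c_nz] := eqVneq c 0; rewrite ?wt0 ?(simplex_codeword_wt G_simplex).
exists (delta_mx 0 i0 *m R); rewrite -?codewordsRG ?mem_codewords //.
by rewrite wt_mulR delta_nz mul1n.
Qed.

Lemma simplex_wmin : wmin G = w.
Proof.
apply: wmin_eq => [c cG c_nz|]; first by rewrite (simplex_codeword_wt G_simplex).
exists (delta_mx 0 i0 *m R); rewrite -?codewordsRG ?mem_codewords //.
by rewrite wt_mulR mulmx_free_eq0 ?delta_nz ?mul1n.
Qed.

Lemma ext_len_simplex : ext_len G = n'.
Proof.
by rewrite /ext_len simplex_wmax simplex_wmin q_mul_w ceil_divMDl // addKn.
Qed.

Local Notation C' := (ext_mx a R).

Lemma wt_ext_simplex x : wt (x *m C') =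
  if x == 0 then 0%N else if x 0 i0 == 0 then w else (w + n')%N.
Proof.
rewrite (wt_mul_ext_mx R a_full x (_ : i0 = 0 :> nat)) // wt_mulR -ext_len_simplex.
have [->|x_nz] := eqVneq x 0; first by rewrite mxE eqxx.
by case: eqP => _ /=; rewrite ?addn0 ?mul1n.
Qed.

Lemma ext_simplex_wmax : wmax C' = (w + n')%N.
Proof.
apply: wmax_eq => [c /codewordsP[x ->]|].
  by rewrite wt_ext_simplex; case: ifP => // _; case: ifP => // _; rewrite leq_addr.
exists (delta_mx 0 i0 *m C'); rewrite ?mem_codewords //.
by rewrite wt_ext_simplex (negPf (delta_nz _)) mxE !eqxx oner_eq0.
Qed.

Lemma ext_simplex_wmin : wmin C' = w.
Proof.
apply: wmin_eq => [c /codewordsP[x ->] c_nz|].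
  rewrite wt_ext_simplex ifN; last by apply: contraNneq c_nz => ->; rewrite mul0mx.
  by case: ifP => // _; rewrite leq_addr.
exists (delta_mx 0 i1 *m C'); rewrite ?mem_codewords //.
rewrite mulmx_free_eq0 ?row_free_ext_mx // delta_nz wt_ext_simplex (negPf (delta_nz _)).
by rewrite mxE eqxx /= eqxx.
Qed.

Lemma ext_simplex_rank : \rank C' = m.
Proof. exact/eqP/row_free_ext_mx. Qed.

Lemma ext_simplex_minimal : minimal_code C'.
Proof.
apply: minimal_ext_mx R_free _ => c c'; rewrite !codewordsRG.
exact: simplex_minimal.
Qed.

Lemma ext_simplex_not_AB : ~~ AB_condition C'.
Proof.
rewrite /AB_condition ext_simplex_wmax ext_simplex_wmin -leqNgt mulnDr q_mul_w.
by rewrite leq_add2l mulnC leq_ceil_div.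
Qed.

Lemma ext_simplex_weight_class t :
  [set x : 'rV_m | wt (x *m C') == t] =
  if t == 0%N then [set 0]
  else if t == w then [set x : 'rV_m | x 0 i0 == 0] :\ 0
  else if t == (w + n')%N then ~: [set x : 'rV_m | x 0 i0 == 0]
  else set0.
Proof.
have w_nz : w != 0%N by rewrite -lt0n w_gt0.
have wn_nz : (w + n' != 0)%N by rewrite addn_eq0 negb_and w_nz.
have wn_w : (w + n' != w)%N by rewrite -[X in _ != X]addn0 eqn_add2l -lt0n n'_gt0.
have [->|t0] := eqVneq t 0%N; last have [->|tw] := eqVneq t w;
  last have [->|twn] := eqVneq t (w + n')%N;
  apply/setP => x; rewrite !inE wt_ext_simplex;
  case: (eqVneq x 0) => [x0|_]; rewrite ?x0 ?mxE ?eqxx //=;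
  case: (eqVneq (x 0 i0) 0) => _ /=; rewrite ?eqxx //; apply/negbTE.
all: by [|rewrite eq_sym].
Qed.

Lemma ext_simplex_wdist t : wdist C' t =
  (if t == 0 then 1 else if t == w then w - 1
   else if t == w + n' then (q - 1) * w else 0)%N.
Proof.
rewrite wdist_row_free ?row_free_ext_mx // ext_simplex_weight_class.
have card_K : #|[set x : 'rV[F]_m | x 0 i0 == 0]| = w.
  have := card_scalar_ker_mx (f := fun x : 'rV[F]_m => x 0 i0) (w := delta_mx 0 i0).
  by rewrite mul1n mxE !eqxx; apply=> // c u v; rewrite !mxE.
case: ifP => _; first exact: cards1.
case: ifP => _.
  rewrite -card_K (cardsD1 0 [set x : 'rV[F]_m | x 0 i0 == 0]).
  by rewrite inE mxE eqxx add1n subn1.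
case: ifP => _; last exact: cards0.
rewrite cardsCs setCK card_K card_mx mul1n.
by rewrite -[in (q ^ m)%N](prednK (ltnW m_gt1)) expnS mulnBl mul1n.
Qed.

End ExtendedSimplex.

Theorem proposition6p1 (F : finFieldType) (m N : nat) (hm : (2 <= m)%N)
  (G : 'M[F]_(m, N)) (hG : simplex_gen G)
  (R : 'M[F]_(m, N)) (hR : ext_basis G R)
  (a : 'rV[F]_(ext_len G)) (ha : forall j, a 0 j != 0) :
  let q := #|F| in
  let n' := ceil_div (q ^ m.-1) (q - 1) in
  let C' := ext_mx a R in
  [/\ ext_len G = n',
      (ext_len G + N = (q ^ m - 1) %/ (q - 1) + n')%N,
      \rank C' = m,
      wmin C' = (q ^ m.-1)%N &
      minimal_code C'] /\
  ~~ AB_condition C' /\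
  (forall w : nat,
        wdist C' w =
          (if w == 0%N then 1
           else if w == q ^ m.-1 then q ^ m.-1 - 1
           else if w == q ^ m.-1 + n' then (q - 1) * q ^ m.-1
           else 0)%N).
Proof.
move=> q n' C'; subst q n' C'.
have len_eq := ext_len_simplex hm hG hR.
have q1_gt0 : (0 < #|F|.-1)%N by rewrite -subn1 subn_gt0 card_finNzRing_gt1.
split; [split | split].
- exact: len_eq.
- by rewrite len_eq addnC -(simplex_length hG) subn1 mulnK.
- exact: ext_simplex_rank.
- exact: ext_simplex_wmin.
- exact: ext_simplex_minimal.
- exact: ext_simplex_not_AB.
- exact: ext_simplex_wdist.
Qed.
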